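(* Let $\lambda$ be a nonzero real number and $n$ a positive integer. Then $$\frac{\lambda^{n-1}}{n}(1)_{n,\frac{1}{\lambda}}=\sum_{k=1}^{n}\beta_{k-1,\lambda}(1-\lambda)\,S_{1,\lambda}(n,k).$$
   Context: For real $y$, $\mu\neq 0$ and integer $k\ge0$: $(y)_{0,\mu}=1$, $(y)_{k,\mu}=y(y-\mu)\cdots(y-(k-1)\mu)$ (used with $\mu=\lambda$ and $\mu=1/\lambda$); $(y)_0=1$, $(y)_k=y(y-1)\cdots(y-k+1)$. The degenerate exponential is $e_\lambda^x(t)=\sum_{k\ge0}(x)_{k,\lambda}t^k/k!=(1+\lambda t)^{x/\lambda}$, $e_\lambda(t)=e^1_\lambda(t)$. The degenerate Bernoulli polynomials are defined by $\frac{t}{e_\lambda(t)-1}e_\lambda^x(t)=\sum_{n\ge0}\beta_{n,\lambda}(x)\frac{t^n}{n!}$. The degenerate Stirling numbers of the first kind are defined by $(x)_{n}=\sum_{k=0}^{n}S_{1,\lambda}(n,k)(x)_{k,\lambda}$ ($n\ge0$). *)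

From mathcomp Require Import all_boot all_order all_algebra.
From mathcomp Require Import reals.
Set Implicit Arguments. Unset Strict Implicit. Unset Printing Implicit Defensive.
Import Order.TTheory GRing.Theory Num.Theory.
Local Open Scope ring_scope.

Definition dfall {R : realType} (y mu : R) (k : nat) : R :=
  \prod_(i < k) (y - i%:R * mu).

Definition ffall {R : realType} (y : R) (k : nat) : R := dfall y 1 k.

(* beta is the family of degenerate Bernoulli polynomials beta_{n,lam}(x):
   coefficientwise form of the formal power series identity
     ((e_lam(t) - 1)/t) * sum_n beta_n(x) t^n/n! = e_lam^x(t),
   where (e_lam(t)-1)/t = sum_m (1)_{m+1,lam} t^m/(m+1)!.
   This is equivalent to t/(e_lam(t)-1) e_lam^x(t) = sum_n beta_n(x) t^n/n!
   since (e_lam(t)-1)/t has constant term 1. *)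
Definition is_degBernoulli {R : realType} (lam : R) (beta : nat -> R -> R) : Prop :=
  forall (n : nat) (x : R),
    \sum_(k < n.+1) (beta k x / (k`!)%:R) * (dfall 1 lam (n - k).+1 / ((n - k).+1`!)%:R)
    = dfall x lam n / (n`!)%:R.

Definition is_degStirling1 {R : realType} (lam : R) (S : nat -> nat -> R) : Prop :=
  forall (n : nat) (x : R),
    ffall x n = \sum_(k < n.+1) S n k * dfall x lam k.

(* Let L be the linear functional on polynomials with L((x)_{k,lam}) = beta_{k-1,lam}(1-lam)
   for k >= 1 and L(1) = 0, so that the right-hand side is L((x)_n).  Since
   x (x)_{i,lam} = (x)_{i+1,lam} + i lam (x)_{i,lam} and
   beta_{i,lam}(1) = beta_{i,lam}(1-lam) + i lam beta_{i-1,lam}(1-lam), the functional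
   q |-> L(x q(x)) sends (x)_{i,lam} to beta_{i,lam}(1).  By the Appell property
   beta_{k,lam}(x+y) = sum_i C(k,i) beta_{i,lam}(x) (y)_{k-i,lam} and
   beta_{k,lam}(1) - beta_{k,lam}(0) = [k = 1], L(x (p(x) - p(x-1))) is the coefficient of
   (x)_{1,lam} in p.  Applied to n (x)_n = x ((x)_n - (x-1)_n) this gives
   n L((x)_n) = S_{1,lam}(n,1), and evaluating the Stirling expansion at x = lam gives
   lam S_{1,lam}(n,1) = (lam)_n = lam^n (1)_{n,1/lam}.
   The Appell property comes from the Cauchy-product form of the definition of beta, by
   cancelling the series (e_lam(t) - 1)/t, whose constant term is 1. *)

From mathcomp Require Import all_boot all_order all_algebra.
From mathcomp Require Import reals.
From mathcomp Require Import ring.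

Set Implicit Arguments.
Unset Strict Implicit.
Unset Printing Implicit Defensive.
Import GRing.Theory Num.Theory.
Local Open Scope ring_scope.

Section CauchyProduct.
Variable R : comNzRingType.
Implicit Types (f g h : nat -> R) (p q : {poly R}).

Definition conv f g k := \sum_(i < k.+1) f i * g (k - i)%N.

Lemma eq_convl f f' g k : (forall i, f i = f' i) -> conv f g k = conv f' g k.
Proof. by move=> ef; apply: eq_bigr => i _; rewrite ef. Qed.

Lemma eq_convr f g g' k : (forall i, g i = g' i) -> conv f g k = conv f g' k.
Proof. by move=> eg; apply: eq_bigr => i _; rewrite eg. Qed.

Lemma convBl f g h k : conv (fun i => f i - g i) h k = conv f h k - conv g h k.
Proof. by rewrite /conv -sumrB; apply: eq_bigr => i _; rewrite mulrBl. Qed.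

Lemma conv_coefM p q f g k : (forall i, (i <= k)%N -> p`_i = f i) ->
  (forall i, (i <= k)%N -> q`_i = g i) -> conv f g k = (p * q)`_k.
Proof.
move=> pf qg; rewrite /conv coefM; apply: eq_bigr => i _.
by rewrite pf ?qg ?leq_subr ?leq_ord.
Qed.

Lemma convC f g k : conv f g k = conv g f k.
Proof.
pose P u : {poly R} := \poly_(i < k.+1) u i.
have coefP u i : (i <= k)%N -> (P u)`_i = u i by rewrite coef_poly ltnS => ->.
by rewrite (conv_coefM (coefP f) (coefP g)) mulrC -(conv_coefM (coefP g) (coefP f)).
Qed.

Lemma convA f g h k : conv f (conv g h) k = conv (conv f g) h k.
Proof.
pose P u : {poly R} := \poly_(i < k.+1) u i.
have coefP u i : (i <= k)%N -> (P u)`_i = u i by rewrite coef_poly ltnS => ->.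
have coefPM u v i : (i <= k)%N -> (P u * P v)`_i = conv u v i.
  by move=> ik; apply/esym/conv_coefM => j ji; rewrite coefP ?(leq_trans ji).
rewrite (conv_coefM (coefP f) (fun i ik => coefPM g h i ik)) mulrA.
by rewrite -(conv_coefM (fun i ik => coefPM f g i ik) (coefP h)).
Qed.

Lemma conv_eq0 f g : g 0%N = 1 -> (forall k, conv f g k = 0) -> forall k, f k = 0.
Proof.
move=> g0 fg0; elim/ltn_ind=> k IH; have := fg0 k.
rewrite /conv big_ord_recr /= subnn g0 mulr1 big1 ?add0r // => i _.
by rewrite IH ?mul0r.
Qed.

End CauchyProduct.

Section ExponentialGeneratingFunction.
Variable R : numFieldType.
Implicit Types f g : nat -> R.

Definition egf f k := f k / k`!%:R.

Lemma natr_fact_neq0 k : k`!%:R != 0 :> R.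
Proof. by rewrite pnatr_eq0 -lt0n fact_gt0. Qed.

Lemma binomial_conv f g m :
  \sum_(i < m.+1) 'C(m, i)%:R * f i * g (m - i)%N = m`!%:R * conv (egf f) (egf g) m.
Proof.
rewrite /conv mulr_sumr; apply: eq_bigr => i _.
rewrite /egf -(bin_fact (leq_ord i)) !natrM.
by field; rewrite !natr_fact_neq0.
Qed.

End ExponentialGeneratingFunction.

Section DegenerateFallingFactorial.
Variable R : realType.
Implicit Types (x y c mu : R).

Lemma dfall0 x mu : dfall x mu 0 = 1.
Proof. by rewrite /dfall big_ord0. Qed.

Lemma dfallSr x mu k : dfall x mu k.+1 = dfall x mu k * (x - k%:R * mu).
Proof. by rewrite /dfall big_ord_recr. Qed.

Lemma dfallS x mu k : dfall x mu k.+1 = x * dfall (x - mu) mu k.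
Proof.
rewrite /dfall big_ord_recl mul0r subr0; congr (_ * _).
by apply: eq_bigr => i _; rewrite lift0 -natr1; ring.
Qed.

Lemma dfall1 x mu : dfall x mu 1 = x.
Proof. by rewrite dfallS dfall0 mulr1. Qed.

Lemma dfall_eq0 x mu i k : (i < k)%N -> dfall (i%:R * mu) mu k = 0.
Proof. by move=> ik; rewrite /dfall (bigD1 (Ordinal ik)) //= subrr mul0r. Qed.

Lemma dfallZ c x mu k : dfall (c * x) (c * mu) k = c ^+ k * dfall x mu k.
Proof.
have -> : c ^+ k = \prod_(i < k) c by rewrite prodr_const card_ord.
by rewrite /dfall -big_split /=; apply: eq_bigr => i _; ring.
Qed.

Lemma dfall_mulx x mu k : x * dfall x mu k = dfall x mu k.+1 + k%:R * mu * dfall x mu k.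
Proof. by rewrite dfallSr; ring. Qed.

Lemma dfallD x y mu m :
  dfall (x + y) mu m = \sum_(i < m.+1) 'C(m, i)%:R * dfall x mu i * dfall y mu (m - i).
Proof.
elim: m => [|m IH]; first by rewrite big_ord1 subnn bin0 !dfall0 !mulr1.
have split_last (i : 'I_m.+1) :
    'C(m, i)%:R * dfall x mu i * dfall y mu (m - i) * (x + y - m%:R * mu)
    = 'C(m, i)%:R * dfall x mu i.+1 * dfall y mu (m - i)
      + 'C(m, i)%:R * dfall x mu i * dfall y mu (m - i).+1.
  have -> : m%:R = i%:R + (m - i)%:R :> R by rewrite -natrD subnKC ?leq_ord.
  by rewrite !dfallSr; ring.
rewrite dfallSr IH mulr_suml (eq_bigr _ (fun i _ => split_last i)) big_split /=.
rewrite [in RHS]big_ord_recl bin0 subn0 dfall0 mul1r.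
under [in RHS]eq_bigr => i _ do rewrite lift0 binS natrD !mulrDl subSS.
rewrite big_split /= addrA [in LHS]addrC; congr (_ + _).
rewrite big_ord_recl bin0 subn0 dfall0 !mul1r; congr (_ + _).
rewrite big_ord_recr /= bin_small // !mul0r addr0.
by apply: eq_bigr => i _; rewrite /bump leq0n add1n subnSK.
Qed.

Lemma mulx_nabla_ffall x m : x * (ffall x m - ffall (x - 1) m) = m%:R * ffall x m.
Proof.
case: m => [|m]; first by rewrite /ffall !dfall0 subrr mul0r mulr0.
by rewrite /ffall [dfall x _ _]dfallS [dfall (x - 1) _ _]dfallSr -natr1; ring.
Qed.

End DegenerateFallingFactorial.

Section DegenerateAppell.
Variables (R : realType) (lam : R).
Implicit Types (x y : R) (p : nat -> R -> R) (w a : nat -> R).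

Definition is_degAppell p := forall k x y,
  p k (x + y) = \sum_(i < k.+1) 'C(k, i)%:R * p i x * dfall y lam (k - i).

Lemma dfall_degAppell : is_degAppell (fun k x => dfall x lam k).
Proof. by move=> k x y; apply: dfallD. Qed.

Lemma degAppell_add_lam p k x : is_degAppell p ->
  p k (x + lam) = p k x + k%:R * lam * p k.-1 x.
Proof.
move=> hp; rewrite hp; case: k => [|k].
  by rewrite big_ord1 bin0 subnn dfall0 !mul0r mul1r mulr1 addr0.
rewrite big_ord_recr big_ord_recr /= big1 ?add0r => [|i _].
  by rewrite subSnn subnn binn binSn dfall0 dfall1; ring.
have -> : (k.+1 - i = (k - i.+1).+2)%N by rewrite subSn ?subnSK // ltnW.
by rewrite !dfallS subrr mul0r !mulr0.
Qed.

(* The coefficient of (x)_{i,lam} in (x)_{k,lam} - (x - 1)_{k,lam}. *)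
Definition nabla_coef k i := (i == k)%:R - 'C(k, i)%:R * dfall (-1) lam (k - i).

Lemma nabla_coef_ge k i : (k <= i)%N -> nabla_coef k i = 0.
Proof.
rewrite /nabla_coef leq_eqVlt => /predU1P[-> | ki].
  by rewrite eqxx binn subnn dfall0 mulr1 subrr.
by rewrite gtn_eqF // bin_small // mul0r subrr.
Qed.

Lemma degAppell_nabla p k N x : is_degAppell p -> (k < N)%N ->
  \sum_(i < N) nabla_coef k i * p i x = p k x - p k (x - 1).
Proof.
move=> hp kN; rewrite /nabla_coef; under eq_bigr do rewrite mulrBl.
rewrite sumrB (bigD1 (Ordinal kN)) //= eqxx mul1r big1 ?addr0 => [|i]; last first.
  by rewrite -val_eqE /= => /negbTE ->; rewrite mul0r.
congr (_ - _); rewrite hp.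
rewrite (big_ord_widen N (fun i => 'C(k, i)%:R * p i x * dfall (-1) lam (k - i)) kN).
rewrite [RHS]big_mkcond /=; apply: eq_bigr => i _; case: ltnP => ik; first by rewrite mulrAC.
by rewrite bin_small // !mul0r.
Qed.

(* The coefficient of (x)_{j,lam} in x * p(x), if w holds those of p. *)
Definition mulx_coef w j := (if j is i.+1 then w i else 0) + j%:R * lam * w j.

Lemma sum_mulx_coef w a N : w N = 0 ->
  \sum_(j < N.+1) mulx_coef w j * a j = \sum_(i < N.+1) w i * (a i.+1 + i%:R * lam * a i).
Proof.
move=> wN; rewrite /mulx_coef; under eq_bigr do rewrite mulrDl.
under [RHS]eq_bigr do rewrite mulrDr.
rewrite !big_split /=; congr (_ + _); last by apply: eq_bigr => i _; ring.
rewrite big_ord_recl mul0r add0r big_ord_recr /= wN mul0r addr0.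
by apply: eq_bigr => i _; rewrite /bump leq0n add1n add0n.
Qed.

Lemma mulx_nabla_dfall x k N : (k <= N)%N ->
  x * (dfall x lam k - dfall (x - 1) lam k)
  = \sum_(j < N.+1) mulx_coef (nabla_coef k) j * dfall x lam j.
Proof.
move=> kN; rewrite sum_mulx_coef ?nabla_coef_ge //.
rewrite -(degAppell_nabla x dfall_degAppell (kN : k < N.+1)%N) mulr_sumr.
by apply: eq_bigr => i _; rewrite mulrCA dfall_mulx.
Qed.

Lemma dfall_lin_indep (c : nat -> R) N : lam != 0 ->
  (forall x, \sum_(j < N) c j * dfall x lam j = 0) -> forall j, (j < N)%N -> c j = 0.
Proof.
move=> lam_neq0 c_indep; elim/ltn_ind=> j IH jN.
have dfall_neq0 : dfall (j%:R * lam) lam j != 0.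
  apply/prodf_neq0 => i _; rewrite -mulrBl mulf_neq0 // subr_eq0 eqr_nat.
  by rewrite gtn_eqF.
move: (c_indep (j%:R * lam)); rewrite (bigD1 (Ordinal jN)) //= big1 ?addr0 => [|i].
  by move/eqP; rewrite mulf_eq0 (negbTE dfall_neq0) orbF => /eqP.
rewrite -val_eqE /=; case: ltngtP => [ij _|ji _|//]; last by rewrite dfall_eq0 ?mulr0.
by rewrite IH ?mul0r ?(ltn_trans ij jN).
Qed.

End DegenerateAppell.

Section DegenerateBernoulli.
Variables (R : realType) (lam : R) (beta : nat -> R -> R).
Hypothesis beta_def : is_degBernoulli lam beta.
Implicit Types x y : R.

Lemma degBernoulli_conv x m :
  conv (egf (beta^~ x)) (fun j => egf (dfall 1 lam) j.+1) m = egf (dfall x lam) m.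
Proof. exact: beta_def. Qed.

Lemma degBernoulli_degAppell : is_degAppell lam beta.
Proof.
move=> k x y.
pose b z := egf (beta^~ z); pose d z := egf (dfall z lam).
pose e j := egf (dfall 1 lam) j.+1.
have e0 : e 0%N = 1 by rewrite /e /egf dfall1 divr1.
have dD m : egf (dfall (x + y) lam) m = conv (d x) (d y) m.
  by rewrite {1}/egf dfallD binomial_conv mulrC mulKf ?natr_fact_neq0.
have bD : forall m, b (x + y) m - conv (b x) (d y) m = 0.
  apply: (conv_eq0 e0) => m; rewrite convBl degBernoulli_conv dD -convA.
  by rewrite (eq_convr _ _ (convC (d y) e)) convA (eq_convl _ _ (degBernoulli_conv x)) subrr.
rewrite (binomial_conv (beta^~ x) (dfall y lam)).
by move/eqP: (bD k); rewrite subr_eq0 => /eqP <-; rewrite /b /egf mulrC divfK ?natr_fact_neq0.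
Qed.

Lemma degBernoulli_delta x k : beta k (x + 1) - beta k x = k%:R * dfall x lam k.-1.
Proof.
rewrite degBernoulli_degAppell (binomial_conv (beta^~ x) (dfall 1 lam)).
rewrite /conv big_ord_recr /= subnn.
case: k => [|k]; first by rewrite big_ord0 add0r /egf dfall0 !divr1 mulr1 mul1r subrr mul0r.
under eq_bigr => i _ do rewrite subSn ?leq_ord //.
rewrite -/(conv (egf (beta^~ x)) (fun j => egf (dfall 1 lam) j.+1) k).
rewrite degBernoulli_conv /egf dfall0 fact0 factS natrM /= divr1 mulr1.
by field; rewrite natr_fact_neq0 nat1r pnatr_eq0.
Qed.

Lemma degBernoulli_delta_at0 k : beta k 1 - beta k 0 = (k == 1%N)%:R.
Proof.
have := degBernoulli_delta 0 k; rewrite add0r => ->.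
case: k => [|[|k]]; first by rewrite mul0r.
  by rewrite dfall0 mulr1.
by rewrite dfallS mul0r mulr0.
Qed.

Lemma sum_mulx_nabla_degBernoulli k N : (k <= N)%N ->
  \sum_(j < N.+1) mulx_coef lam (nabla_coef lam k) j * beta j.-1 (1 - lam)
  = (k == 1%N)%:R.
Proof.
move=> kN; rewrite (sum_mulx_coef _ (fun j => beta j.-1 (1 - lam))) ?nabla_coef_ge //.
rewrite -degBernoulli_delta_at0 -[X in beta k 1 - beta k X](subrr 1).
rewrite -(degAppell_nabla 1 degBernoulli_degAppell (kN : k < N.+1)%N).
apply: eq_bigr => i _; congr (_ * _).
by rewrite /= -[in RHS](subrK lam 1) [in RHS](degAppell_add_lam _ _ degBernoulli_degAppell).
Qed.

End DegenerateBernoulli.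

Section DegenerateStirling.
Variables (R : realType) (lam : R) (S : nat -> nat -> R).
Hypotheses (lam_neq0 : lam != 0) (S_def : is_degStirling1 lam S).

Lemma degStirling1_n0 n : (0 < n)%N -> S n 0 = 0.
Proof.
case: n => // n _; have := S_def n.+1 0.
rewrite /ffall dfallS mul0r big_ord_recl dfall0 mulr1 big1 ?addr0 // => i _.
by rewrite lift0 dfallS mul0r mulr0.
Qed.

Lemma degStirling1_n1 n : (0 < n)%N -> lam * S n 1 = ffall lam n.
Proof.
move=> n_gt0; rewrite S_def big_ord_recl degStirling1_n0 // mul0r add0r.
case: n n_gt0 => // n _; rewrite big_ord_recl lift0 dfall1 mulrC big1 ?addr0 // => i _.
by rewrite !lift0 !dfallS subrr mul0r !mulr0.
Qed.

Lemma degStirling1_mulx_nabla n j : (j <= n)%N ->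
  \sum_(k < n.+1) S n k * mulx_coef lam (nabla_coef lam k) j = n%:R * S n j.
Proof.
move=> jn; apply/eqP; rewrite -subr_eq0; apply/eqP.
pose c i := \sum_(k < n.+1) S n k * mulx_coef lam (nabla_coef lam k) i - n%:R * S n i.
apply: (dfall_lin_indep (c := c) (N := n.+1) lam_neq0 _ jn) => x.
under eq_bigr do rewrite mulrBl.
rewrite sumrB; under [X in _ - X]eq_bigr do rewrite -mulrA.
rewrite -mulr_sumr -S_def -mulx_nabla_ffall !S_def -sumrB mulr_sumr.
apply/eqP; rewrite subr_eq0; apply/eqP.
under eq_bigr do rewrite mulr_suml.
rewrite exchange_big /=; apply: eq_bigr => k _.
rewrite -mulrBr mulrCA (mulx_nabla_dfall _ _ (leq_ord k)) mulr_sumr.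
by apply: eq_bigr => i _; rewrite mulrA.
Qed.

Variable beta : nat -> R -> R.
Hypothesis beta_def : is_degBernoulli lam beta.

Lemma degStirling1_degBernoulli_sum n : (0 < n)%N ->
  n%:R * \sum_(1 <= k < n.+1) beta k.-1 (1 - lam) * S n k = S n 1.
Proof.
move=> n_gt0.
have -> : \sum_(1 <= k < n.+1) beta k.-1 (1 - lam) * S n k
          = \sum_(k < n.+1) S n k * beta k.-1 (1 - lam).
  rewrite -(big_mkord xpredT (fun k => S n k * beta k.-1 (1 - lam))).
  rewrite big_ltn // degStirling1_n0 // mul0r add0r.
  by apply: eq_bigr => k _; rewrite mulrC.
rewrite mulr_sumr.
transitivity (\sum_(k < n.+1) S n k * (k == 1%N :> nat)%:R).
  under eq_bigr => j _ do rewrite mulrA -(degStirling1_mulx_nabla (leq_ord j)) mulr_suml.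
  rewrite exchange_big /=; apply: eq_bigr => k _.
  rewrite -(sum_mulx_nabla_degBernoulli beta_def (leq_ord k)) mulr_sumr.
  by apply: eq_bigr => j _; rewrite mulrA.
rewrite (bigD1 (Ordinal (n_gt0 : 1 < n.+1)%N)) //= mulr1 big1 ?addr0 // => k.
by rewrite -val_eqE /= => /negbTE ->; rewrite mulr0.
Qed.

End DegenerateStirling.

Theorem theorem10 (R : realType) (lam : R) (beta : nat -> R -> R) (S : nat -> nat -> R)
  (n : nat) :
  lam != 0 -> (0 < n)%N ->
  is_degBernoulli lam beta -> is_degStirling1 lam S ->
  lam ^+ n.-1 / n%:R * dfall 1 lam^-1 n
  = \sum_(1 <= k < n.+1) beta k.-1 (1 - lam) * S n k.
Proof.
move=> lam_neq0 n_gt0 beta_def S_def.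
have n_neq0 : n%:R != 0 :> R by rewrite pnatr_eq0 -lt0n.
have lhs : lam ^+ n.-1 * dfall 1 lam^-1 n = S n 1.
  apply: (mulfI lam_neq0); rewrite mulrA -exprS prednK // degStirling1_n1 //.
  by rewrite -dfallZ mulr1 mulfV.
rewrite mulrAC lhs -(degStirling1_degBernoulli_sum lam_neq0 S_def beta_def n_gt0).
by rewrite mulrC mulKf.
Qed.
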